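(* Let $X,Y$ be distinct candidates, let $T\in SO(P)$ satisfy $T(\mathbf r_{X>Y})=\mathbf r_{X>Y}$, and let $\mathbf p\in P$. Then there exists $\mathbf q\in\mathbb R\mathbf 1$ such that $T(\mathbf p)+\mathbf q\sim_{X,Y}\mathbf p$.
   Context: Fix an integer $n\ge 2$ and a set $\mathbf C$ of $n$ candidates. Fix a composition $\lambda=(\lambda_1,\dots,\lambda_m)$ of $n$ (positive integers with $\sum_i\lambda_i=n$), write $[m]=\{1,\dots,m\}$. A ballot is a function $b:\mathbf C\to[m]$ with $|b^{-1}(i)|=\lambda_i$ for every $i$; $\mathbf C_\lambda$ denotes the set of ballots. The profile space is $P=\mathbb R^{\mathbf C_\lambda}$ with basis $\{\delta_b\}$ (indicator functions) and inner product $\mathbf p\cdot\mathbf q=\sum_b\mathbf p(b)\mathbf q(b)$; $\mathbf 1=\sum_b\delta_b$. For candidates $X,Y$: $\mathbf a_{X>Y}=\sum_{b:\,b(X)<b(Y)}\delta_b$, $\mathbf r_{X>Y}=\mathbf a_{X>Y}-\mathbf a_{Y>X}$. Two profiles are $X,Y$-equivalent, $\mathbf p\sim_{X,Y}\mathbf q$, if $(\mathbf p-\mathbf q)\cdot\mathbf a_{X>Y}=0$ and $(\mathbf p-\mathbf q)\cdot\mathbf a_{Y>X}=0$. $SO(P)$ denotes the group of linear isometries of $P$ of determinant $1$. *)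

From HB Require Import structures.
From mathcomp Require Import all_boot all_order all_algebra.
Set Implicit Arguments. Unset Strict Implicit. Unset Printing Implicit Defensive.
Import Order.TTheory GRing.Theory Num.Theory.
Local Open Scope ring_scope.

(* Candidates are 'I_n; the composition lambda = (lam 0, ..., lam (m-1)) of n
   is given by m and lam : 'I_m -> nat; tiers [m] are 'I_m (tier 0 = "1"). *)

Definition ballot (n m : nat) (lam : 'I_m -> nat) :=
  {b : {ffun 'I_n -> 'I_m} | [forall i, #|[pred c | b c == i]| == lam i]}.

(* Profile space P = R^{C_lambda}, in coordinates w.r.t. the basis delta_b,
   indexed through enum_rank/enum_val. *)
Definition profile (R : pzRingType) n m (lam : 'I_m -> nat) :=
  'cV[R]_#|{: ballot n lam}|.

Definition delta (R : pzRingType) n m (lam : 'I_m -> nat) (b : ballot n lam)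
  : profile R n lam := delta_mx (enum_rank b) 0.

Definition pdot (R : pzRingType) n m (lam : 'I_m -> nat) (p q : profile R n lam) : R :=
  \sum_(i < #|{: ballot n lam}|) p i 0 * q i 0.

Definition ones (R : pzRingType) n m (lam : 'I_m -> nat) : profile R n lam :=
  \sum_(b : ballot n lam) delta R b.

Definition aXY (R : pzRingType) n m (lam : 'I_m -> nat) (X Y : 'I_n)
  : profile R n lam :=
  \sum_(b : ballot n lam | (val b X < val b Y)%N) delta R b.

Definition rXY (R : pzRingType) n m (lam : 'I_m -> nat) (X Y : 'I_n)
  : profile R n lam := aXY R lam X Y - aXY R lam Y X.

Definition equivXY (R : pzRingType) n m (lam : 'I_m -> nat) (X Y : 'I_n)
  (p q : profile R n lam) : Prop :=
  pdot (p - q) (aXY R lam X Y) = 0 /\ pdot (p - q) (aXY R lam Y X) = 0.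

Definition inSO (R : comNzRingType) n m (lam : 'I_m -> nat)
  (T : 'M[R]_#|{: ballot n lam}|) : Prop :=
  (forall p q : profile R n lam, pdot (T *m p) (T *m q) = pdot p q) /\ \det T = 1.

(* T fixes r_{X>Y} and preserves the inner product, so the displacement
   v = T p - p is orthogonal to r_{X>Y}: it pairs equally with a_{X>Y} and
   a_{Y>X}.  Swapping the tiers of X and Y is a bijection between the ballots
   ranking X above Y and those ranking Y above X, so 1 also pairs equally with
   both; subtracting the right multiple of 1 from v kills both pairings. *)

From HB Require Import structures.
From mathcomp Require Import all_boot all_order all_algebra all_fingroup.
Set Implicit Arguments. Unset Strict Implicit. Unset Printing Implicit Defensive.
Import Order.TTheory GRing.Theory Num.Theory.
Local Open Scope ring_scope.

Section BallotSwap.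
Variables (n m : nat) (lam : 'I_m -> nat) (X Y : 'I_n).

Lemma ballot_swap_subproof (b : ballot n lam) :
  [forall i, #|[pred c | [ffun c => val b (tperm X Y c)] c == i]| == lam i].
Proof.
apply/forallP => i.
have <- : #|tperm X Y @^-1: [set c | val b c == i]| =
          #|[pred c | [ffun c => val b (tperm X Y c)] c == i]|.
  by apply: eq_card => c; rewrite !inE ffunE.
rewrite card_preimset; last exact: perm_inj.
have -> : #|[set c | val b c == i]| = #|[pred c | val b c == i]|.
  by apply: eq_card => c; rewrite inE.
exact: (forallP (valP b) i).
Qed.

Definition ballot_swap (b : ballot n lam) : ballot n lam :=
  exist (fun f : {ffun 'I_n -> 'I_m} => [forall i, #|[pred c | f c == i]| == lam i])
    _ (ballot_swap_subproof b).

Lemma ballot_swapK : involutive ballot_swap.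
Proof. by move=> b; apply: val_inj; apply/ffunP => c; rewrite !ffunE tpermK. Qed.

Lemma ballot_swapX b : val (ballot_swap b) X = val b Y.
Proof. by rewrite ffunE tpermL. Qed.

Lemma ballot_swapY b : val (ballot_swap b) Y = val b X.
Proof. by rewrite ffunE tpermR. Qed.

Lemma card_ballot_above :
  #|[pred b : ballot n lam | (val b X < val b Y)%N]| =
  #|[pred b : ballot n lam | (val b Y < val b X)%N]|.
Proof.
rewrite -(card_image (inv_inj ballot_swapK)); apply: eq_card => b.
apply/imageP/idP => [[b' + ->]|hb].
  by rewrite !inE ballot_swapX ballot_swapY.
by exists (ballot_swap b); rewrite ?ballot_swapK // inE ballot_swapX ballot_swapY.
Qed.

End BallotSwap.

Section InnerProduct.
Variables (R : comNzRingType) (n m : nat) (lam : 'I_m -> nat).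
Local Notation P := (profile R n lam).

Lemma pdotC (p q : P) : pdot p q = pdot q p.
Proof. by apply: eq_bigr => i _; rewrite mulrC. Qed.

Lemma pdotDl (p q r : P) : pdot (p + q) r = pdot p r + pdot q r.
Proof. by rewrite /pdot -big_split; apply: eq_bigr => i _; rewrite !mxE mulrDl. Qed.

Lemma pdotZl c (p r : P) : pdot (c *: p) r = c * pdot p r.
Proof. by rewrite /pdot mulr_sumr; apply: eq_bigr => i _; rewrite !mxE mulrA. Qed.

Lemma pdotBl (p q r : P) : pdot (p - q) r = pdot p r - pdot q r.
Proof. by rewrite -scaleN1r pdotDl pdotZl mulN1r. Qed.

Lemma pdotBr (p q r : P) : pdot r (p - q) = pdot r p - pdot r q.
Proof. by rewrite !(pdotC r) pdotBl. Qed.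

Lemma pdot0r (p : P) : pdot p 0 = 0.
Proof. by apply: big1 => i _; rewrite mxE mulr0. Qed.

Lemma sum_delta_coord (Q : pred (ballot n lam)) i :
  (\sum_(b | Q b) delta R b) i 0 = (Q (enum_val i))%:R.
Proof.
rewrite summxE (big_mkcond Q) (bigD1 (enum_val i)) //= big1 => [|b neq_b].
  by rewrite /delta mxE enum_valK !eqxx addr0; case: (Q _).
rewrite /delta mxE; case: (Q b) => //; case: eqP => // i_b.
by rewrite i_b enum_rankK eqxx in neq_b.
Qed.

Lemma pdot_ones_sum_delta (Q : pred (ballot n lam)) :
  pdot (ones R n lam) (\sum_(b | Q b) delta R b) = #|Q|%:R.
Proof.
rewrite /pdot /ones.
under eq_bigr => i _ do rewrite !sum_delta_coord /= mul1r.
transitivity (\sum_(b : ballot n lam) ((Q b)%:R : R)).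
  by rewrite (big_enum_val (fun b => (Q b)%:R)).
rewrite (eq_bigr (fun b => if Q b then 1 else 0)) => [|b _]; last by case: (Q b).
by rewrite -big_mkcond sumr_const.
Qed.

Lemma pdot_isometry_fixed (T : 'M[R]_#|{: ballot n lam}|) (p r : P) :
  (forall u v : P, pdot (T *m u) (T *m v) = pdot u v) -> T *m r = r ->
  pdot (T *m p - p) r = 0.
Proof. by move=> isoT fix_r; rewrite pdotBl -{1}fix_r isoT subrr. Qed.

End InnerProduct.

Lemma pdot_shift_balanced (F : fieldType) n m (lam : 'I_m -> nat)
  (v u a a' : profile F n lam) :
  pdot v a = pdot v a' -> pdot u a = pdot u a' ->
  (pdot u a = 0 -> pdot v a = 0) ->
  exists c, pdot (v + c *: u) a = 0 /\ pdot (v + c *: u) a' = 0.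
Proof.
move=> va ua ua0; exists (- (pdot v a / pdot u a)).
rewrite !pdotDl !pdotZl -va -ua mulNr.
have [/ua0 -> | nz] := eqVneq (pdot u a) 0; first by rewrite !mul0r oppr0 addr0.
by rewrite divfK // subrr.
Qed.

Theorem mainTheorem6 (R : realFieldType) (n m : nat) (lam : 'I_m -> nat)
  (hn : (2 <= n)%N) (hpos : forall i, (0 < lam i)%N)
  (hsum : (\sum_(i < m) lam i)%N = n)
  (X Y : 'I_n) (hXY : X != Y)
  (T : 'M[R]_#|{: ballot n lam}|) (hT : inSO T)
  (hTr : T *m rXY R lam X Y = rXY R lam X Y)
  (p : profile R n lam) :
  exists c : R, equivXY X Y (T *m p + c *: ones R n lam) p.
Proof.
have v_balanced : pdot (T *m p - p) (aXY R lam X Y) = pdot (T *m p - p) (aXY R lam Y X).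
  by apply/eqP; rewrite -subr_eq0 -pdotBr (pdot_isometry_fixed p hT.1 hTr).
have ones_balanced : pdot (ones R n lam) (aXY R lam X Y) = pdot (ones R n lam) (aXY R lam Y X).
  by rewrite !pdot_ones_sum_delta card_ballot_above.
have ones_degenerate : pdot (ones R n lam) (aXY R lam X Y) = 0 ->
                       pdot (T *m p - p) (aXY R lam X Y) = 0.
  rewrite pdot_ones_sum_delta => /eqP; rewrite pnatr_eq0 => /eqP/card0_eq empty.
  by rewrite /aXY big_pred0 ?pdot0r.
have [c [hX hY]] := pdot_shift_balanced v_balanced ones_balanced ones_degenerate.
by exists c; rewrite /equivXY [_ + _ - p]addrAC.
Qed.
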